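(* Let $\Omega$ be a nonempty set, let $\mathcal A$ be an algebra of subsets of $\Omega$, and let $\mathcal X_{\mathcal A}$ denote the set of bounded functions $X:\Omega\to\mathbb R$ that are measurable with respect to $\mathcal A$ (i.e. $\{X>x\}\in\mathcal A$ and $\{X\ge x\}\in\mathcal A$ for all $x\in\mathbb R$). For a mapping $\mathcal R:\mathcal X_{\mathcal A}\to\mathbb R$ the following are equivalent: (i) $\mathcal R$ satisfies ordinality, i.e. $\mathcal R(\phi\circ X)=\phi(\mathcal R(X))$ for all $X\in\mathcal X_{\mathcal A}$ and all increasing (non-strictly) continuous functions $\phi:\mathbb R\to\mathbb R$; (ii) $\mathcal R$ is a Choquet quantile, i.e. there exists a binary capacity $v$ on $\mathcal A$ such that $\mathcal R(X)=\int X\,\mathrm d v$ for all $X\in\mathcal X_{\mathcal A}$.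
   Context: A capacity on $\mathcal A$ is a function $w:\mathcal A\to\mathbb R$ that is increasing ($w(A)\le w(B)$ whenever $A\subseteq B$) with $w(\varnothing)=0$ and $w(\Omega)=1$; it is binary if it takes values only in $\{0,1\}$. For a capacity $w$ and bounded measurable $X$, the Choquet integral is $\int X\,\mathrm dw=\int_{-\infty}^0 (w(X\ge x)-1)\,\mathrm dx+\int_0^\infty w(X\ge x)\,\mathrm dx$. *)

From HB Require Import structures.
From mathcomp Require Import all_boot all_order all_algebra.
From mathcomp Require Import all_classical all_reals all_analysis.
Set Implicit Arguments. Unset Strict Implicit. Unset Printing Implicit Defensive.
Import Order.TTheory GRing.Theory Num.Theory numFieldNormedType.Exports.
Local Open Scope classical_set_scope.
Local Open Scope ring_scope.

Definition is_algebra (Omega : Type) (A : set (set Omega)) : Prop :=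
  [/\ A set0,
      (forall B, A B -> A (~` B)) &
      (forall B C, A B -> A C -> A (B `|` C))].

Definition XA (R : realType) (Omega : Type) (A : set (set Omega))
  (X : Omega -> R) : Prop :=
  (exists M : R, forall o, `|X o| <= M) /\
  (forall x : R, A [set o | x < X o] /\ A [set o | x <= X o]).

(* A capacity on A (a set function, only its values on A matter). *)
Definition capacity (R : realType) (Omega : Type) (A : set (set Omega))
  (w : set Omega -> R) : Prop :=
  [/\ (forall B C, A B -> A C -> B `<=` C -> w B <= w C),
      w set0 = 0 & w setT = 1].

Definition binary_capacity (R : realType) (Omega : Type)
  (A : set (set Omega)) (w : set Omega -> R) : Prop :=
  capacity A w /\ (forall B, A B -> w B = 0 \/ w B = 1).

Definition choquet (R : realType) (Omega : Type) (w : set Omega -> R)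
  (X : Omega -> R) : \bar R :=
  (\int[@lebesgue_measure R]_(x in `]-oo, 0%R[) ((w [set o | x <= X o] - 1)%:E)
   + \int[@lebesgue_measure R]_(x in `[0%R, +oo[) ((w [set o | x <= X o])%:E))%E.

Definition ordinality (R : realType) (Omega : Type) (A : set (set Omega))
  (Rm : (Omega -> R) -> R) : Prop :=
  forall (X : Omega -> R) (phi : R -> R),
    XA A X -> {homo phi : x y / x <= y} -> continuous phi ->
    Rm (phi \o X) = phi (Rm X).

From HB Require Import structures.
From mathcomp Require Import all_boot all_order all_algebra.
From mathcomp Require Import all_classical all_reals all_analysis.
From mathcomp Require Import lra.
Set Implicit Arguments. Unset Strict Implicit. Unset Printing Implicit Defensive.
Import Order.TTheory GRing.Theory Num.Theory numFieldNormedType.Exports.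
Local Open Scope classical_set_scope.
Local Open Scope ring_scope.

(* For a binary capacity v and X in X_A, the map x |-> v(X >= x) falls from 1
   to 0 at a single point t, and the Choquet integral of X is exactly t.  For
   phi increasing and continuous, the sets {phi(X) >= x} are squeezed between
   sets {X >= a} with a near t, so phi o X falls at phi(t): Choquet quantiles
   are ordinal.  Conversely, given an ordinal R put v(B) := R(1_B).  Opening a
   gap of length 1 at level x, Z := X + 1_{X >= x}, makes both X and 1_{X >= x}
   continuous increasing functions of Z, so ordinality computes R(X) and
   v(X >= x) from the single number R(Z); it follows that v(X >= x) falls from
   1 to 0 exactly at R(X).  Applied to 1_B and 1_B + 1_C (B included in C) this
   makes v a binary capacity, and then the Choquet integral of X is R(X). *)

Lemma upset_cut (R : realType) (U : set R) :
  (forall x y, x <= y -> U x -> U y) -> (exists x, ~ U x) -> (exists y, U y) ->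
  exists t, (forall x, x < t -> ~ U x) /\ (forall x, t < x -> U x).
Proof.
move=> Uup [b nUb] [u Uu].
have nU_lt_u y : ~ U y -> y < u.
  by move=> nUy; rewrite ltNge; apply: contra_notN nUy => /Uup; apply.
have supU : has_sup (~` U) by split; [exists b | exists u => y /nU_lt_u/ltW].
exists (sup (~` U)); split => [x xt Ux | x tx]; last first.
  by apply: contrapT => /(sup_upper_bound supU); rewrite leNgt tx.
have gap : 0 < sup (~` U) - x by rewrite subr_gt0.
have [e nUe] := sup_adherent gap supU.
by rewrite opprB addrCA subrr addr0 => /ltW xe; apply: nUe; exact: Uup Ux.
Qed.

Section AlgebraOfSets.
Variables (Omega : Type) (A : set (set Omega)).
Hypothesis algA : is_algebra A.

Lemma algebra0 : A set0. Proof. by case: algA. Qed.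
Lemma algebraC B : A B -> A (~` B). Proof. by case: algA => _ + _; apply. Qed.
Lemma algebraU B C : A B -> A C -> A (B `|` C). Proof. by case: algA => _ _; apply. Qed.
Lemma algebraT : A setT. Proof. by rewrite -setC0; exact/algebraC/algebra0. Qed.

Lemma algebraI B C : A B -> A C -> A (B `&` C).
Proof.
by move=> AB AC; rewrite -[B `&` C]setCK setCI; apply/algebraC/algebraU; exact: algebraC.
Qed.

Lemma algebraD B C : A B -> A C -> A (B `\` C).
Proof. by move=> AB AC; apply: algebraI => //; exact: algebraC. Qed.

Lemma algebra_const (P : Prop) : A [set _ : Omega | P].
Proof.
by have [/propT ->|/propF ->] := pselect P; [exact: algebraT | exact: algebra0].
Qed.
End AlgebraOfSets.

Section BoundedMeasurable.
Variables (R : realType) (Omega : Type) (A : set (set Omega)).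
Hypothesis algA : is_algebra A.

Lemma XA_upset (X : Omega -> R) (U : set R) : XA A X ->
  (forall x y, x <= y -> U x -> U y) -> A [set o | U (X o)].
Proof.
move=> [_ AX] Uup.
have [[b nUb]|allU] := pselect (exists b, ~ U b); last first.
  rewrite (_ : [set o | _] = setT); first exact: algebraT.
  by apply/seteqP; split => // o _; apply: contrapT => nU; apply: allU; exists (X o).
have [[u Uu]|noU] := pselect (exists u, U u); last first.
  rewrite (_ : [set o | _] = set0); first exact: algebra0.
  by apply/seteqP; split => // o Uo; apply: noU; exists (X o).
have [t [ltU gtU]] := upset_cut Uup (ex_intro _ b nUb) (ex_intro _ u Uu).
have [Ut|nUt] := pselect (U t).
  rewrite (_ : [set o | _] = [set o | t <= X o]); first by case: (AX t).
  apply/seteqP; split => o /= => [Uo|/Uup]; last exact.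
  by rewrite leNgt; apply/negP => /ltU.
rewrite (_ : [set o | _] = [set o | t < X o]); first by case: (AX t).
apply/seteqP; split => o /= => [Uo|/gtU //].
rewrite lt_neqAle leNgt; apply/andP; split; last by apply/negP => /ltU.
by apply/eqP => tX; apply: nUt; rewrite tX.
Qed.

Lemma XA_comp (X : Omega -> R) (g : R -> R) : XA A X ->
  {homo g : x y / x <= y} -> XA A (g \o X).
Proof.
move=> XAX gup; split.
  have [[M XM] _] := XAX; exists (`|g (- M)| + `|g M|) => o /=.
  have /andP[lo hi] : - M <= X o <= M by rewrite -ler_norml.
  have := gup _ _ lo; have := gup _ _ hi.
  have := ler_norm (g M); have := ler_norm (- g (- M)); rewrite normrN.
  have := normr_ge0 (g M); have := normr_ge0 (g (- M)).
  by rewrite ler_norml; move=> *; apply/andP; split; lra.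
move=> x; split.
- apply: (XA_upset (U := fun y => x < g y)) => // a b /gup ab xa.
  exact: lt_le_trans ab.
- apply: (XA_upset (U := fun y => x <= g y)) => // a b /gup ab xa.
  exact: le_trans ab.
Qed.

Lemma indicD_values (B C : set Omega) o : B `<=` C ->
  [\/ [/\ B o, C o & \1_B o + \1_C o = 2 :> R],
      [/\ ~ B o, C o & \1_B o + \1_C o = 1 :> R] |
      [/\ ~ B o, ~ C o & \1_B o + \1_C o = 0 :> R]].
Proof.
move=> BC; rewrite !indicE; have [Bo|nBo] := pselect (B o).
  by have Co := BC _ Bo; rewrite (mem_set Bo) (mem_set Co); apply: Or31.
have [Co|nCo] := pselect (C o).
  by rewrite (memNset nBo) (mem_set Co) add0r; apply: Or32.
by rewrite !memNset // addr0; apply: Or33.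
Qed.

Lemma preimage_indicD (B C : set Omega) (U : set R) : B `<=` C ->
  [set o | U (\1_B o + \1_C o)] =
  (B `&` [set _ | U 2]) `|` ((C `\` B) `&` [set _ | U 1]) `|` (~` C `&` [set _ | U 0]).
Proof.
move=> BC; apply/funext => o /=; apply/propext.
by case: (indicD_values o BC) => -[? ? ->]; tauto.
Qed.

Lemma XA_indicD (B C : set Omega) : A B -> A C -> B `<=` C ->
  XA A (\1_B \+ \1_C : Omega -> R).
Proof.
move=> AB AC BC; split.
  exists 2 => o /=; rewrite !indicE.
  by case: (o \in B); case: (o \in C); rewrite /= ger0_norm ?addr_ge0 //; lra.
suff AU (U : set R) : A [set o | U (\1_B o + \1_C o)].
  by move=> x; split; [exact: (AU (fun y => x < y)) | exact: (AU (fun y => x <= y))].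
have AD := algebraD algA; have AI := algebraI algA; have AK := algebra_const algA.
rewrite preimage_indicD //; apply/(algebraU algA)/AI/AK/(algebraC algA) => //.
by apply/(algebraU algA); apply/AI/AK; [|exact: AD].
Qed.

Lemma XA_indic (B : set Omega) : A B -> XA A (\1_B : Omega -> R).
Proof.
move=> AB; have := XA_indicD (algebra0 algA) AB (@sub0set _ B).
by congr XA; apply/funext => o; rewrite indic0 /= add0r.
Qed.

Lemma XA_cst (c : R) : XA A (cst c).
Proof. exact: XA_comp (XA_indic (algebra0 algA)) (fun _ _ _ => lexx c). Qed.
End BoundedMeasurable.

Section StepIntegral.
Variable R : realType.
Local Notation mu := (@lebesgue_measure R).

Lemma eq_integral_but1 (D : set R) (t : R) (f g : R -> R) : measurable D ->
  measurable_fun setT g -> (forall x, x != t -> f x = g x) ->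
  (\int[mu]_(x in D) (f x)%:E = \int[mu]_(x in D) (g x)%:E)%E.
Proof.
move=> mD mg fg; have mDt : measurable (D `\ t) by exact: measurableD.
have mgt : measurable_fun (D `\ t) g by exact: measurable_funS mg.
have mft : measurable_fun (D `\ t) f.
  by apply: eq_measurable_fun mgt => x; rewrite inE => -[_ /eqP/fg <-].
rewrite -(integral_setD1 mDt) -?[RHS](integral_setD1 mDt);
  try exact/measurable_realfun.measurable_EFinP.
by apply: eq_integral => x; rewrite inE => -[_ /eqP/fg ->].
Qed.

Lemma integral_ge0_indic_ltNy (t : R) :
  (\int[mu]_(x in `[0%R, +oo[) (\1_(`]-oo, t[) x)%:E = (Num.max t 0)%:E)%E.
Proof.
rewrite integral_indic //= (_ : _ `&` _ = `[0%R, t[%classic); last first.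
  by apply/seteqP; split => x /=; rewrite !in_itv /= ?andbT;
    [case=> -> -> | case/andP=> -> ->].
rewrite lebesgue_measure_itv /= lte_fin oppr0 adde0.
by have [t0|t0] := ltP 0 t.
Qed.

Lemma integral_lt0_indic_ltNy_sub1 (t : R) :
  (\int[mu]_(x in `]-oo, 0%R[) (\1_(`]-oo, t[) x - 1)%:E = (Num.min t 0)%:E)%E.
Proof.
transitivity (\int[mu]_(x in `]-oo, 0%R[) (- (\1_(`[t, +oo[) x : R)%:E))%E.
  apply: eq_integral => x _; rewrite !indicE !mem_setE !in_itv /= andbT.
  by case: ltP => _; rewrite ?subrr ?oppr0 ?sub0r.
rewrite integral_ge0N; last by move=> x _; rewrite lee_fin indicE.
rewrite integral_indic //= (_ : _ `&` _ = `[t, 0%R[%classic); last first.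
  by apply/seteqP; split => x /=; rewrite !in_itv /= ?andbT;
    [case=> -> -> | case/andP=> -> ->].
rewrite lebesgue_measure_itv /= lte_fin add0r.
by have [t0|t0] := ltP t 0; rewrite ?EFinN ?oppeK ?oppe0.
Qed.

Definition step_down_at (f : R -> R) (t : R) : Prop :=
  (forall x, x < t -> f x = 1) /\ (forall x, t < x -> f x = 0).

Lemma step_down_integral (f : R -> R) (t : R) : step_down_at f t ->
  (\int[mu]_(x in `]-oo, 0%R[) ((f x - 1)%:E)
   + \int[mu]_(x in `[0%R, +oo[) ((f x)%:E) = t%:E)%E.
Proof.
move=> [f1 f0]; set G : R -> R := \1_(`]-oo, t[).
have mG : measurable_fun setT G by exact: measurable_realfun.measurable_indic.
have fG x : x != t -> f x = G x.
  rewrite /G indicE mem_setE in_itv /=.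
  by case: ltgtP => // tx _; [rewrite f1 | rewrite f0].
have fG1 x : x != t -> f x - 1 = G x - 1 by move/fG ->.
have mG1 : measurable_fun setT (fun x => G x - 1).
  exact: measurable_realfun.measurable_funB.
rewrite (eq_integral_but1 _ mG1 fG1) // (eq_integral_but1 _ mG fG) //.
rewrite integral_lt0_indic_ltNy_sub1 integral_ge0_indic_ltNy -EFinD.
by rewrite addrC addr_max_min addr0.
Qed.
End StepIntegral.

Section Ramps.
Variable R : realType.

Definition ramp (c z : R) : R := Num.min (Num.max (z - c) 0) 1.
Definition gap_open (c z : R) : R := z + (c <= z)%R%:R.
Definition gap_close (c z : R) : R := Num.max (Num.min z c) (z - 1).

Lemma ramp_homo c : {homo ramp c : x y / x <= y}.
Proof. by move=> x y xy; rewrite /ramp le_min2 // le_max2 // lerB. Qed.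

Lemma gap_open_homo c : {homo gap_open c : x y / x <= y}.
Proof.
move=> x y xy; rewrite /gap_open.
by case: (leP c x) => cx; case: (leP c y) => cy /=; lra.
Qed.

Lemma gap_close_homo c : {homo gap_close c : x y / x <= y}.
Proof. by move=> x y xy; rewrite /gap_close le_max2 ?le_min2 ?lerB. Qed.

Lemma continuousB_cst (c : R) : continuous (fun z : R => z - c).
Proof. by move=> z; apply: cvgB; [exact: cvg_id | exact: cvg_cst]. Qed.

Lemma ramp_continuous c : continuous (ramp c).
Proof.
apply: min_fun_continuous; last exact: cst_continuous.
by apply: max_fun_continuous; [exact: continuousB_cst | exact: cst_continuous].
Qed.

Lemma gap_close_continuous c : continuous (gap_close c).
Proof.
apply: max_fun_continuous; last exact: continuousB_cst.
by apply: min_fun_continuous; [move=> z; exact: cvg_id | exact: cst_continuous].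
Qed.

Lemma ramp_ge1 c z : c + 1 <= z -> ramp c z = 1.
Proof. by move=> cz; rewrite /ramp max_l ?min_r //; lra. Qed.

Lemma ramp_le0 c z : z <= c -> ramp c z = 0.
Proof. by move=> zc; rewrite /ramp max_r ?min_l //; lra. Qed.

Lemma gap_openK c : cancel (gap_open c) (gap_close c).
Proof.
move=> z; rewrite /gap_open /gap_close.
by case: (leP c z) => cz /=; [rewrite min_r ?max_r | rewrite addr0 min_l ?max_l]; lra.
Qed.

Lemma ramp_gap_open c z : ramp c (gap_open c z) = (c <= z)%R%:R.
Proof.
rewrite /gap_open; case: (leP c z) => cz /=; first by rewrite ramp_ge1 //; lra.
by rewrite addr0 ramp_le0 // ltW.
Qed.

Lemma continuous_lt_left (phi : R -> R) t y : continuous phi -> y < phi t ->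
  exists2 a, a < t & y < phi a.
Proof.
move=> phi_cont yphi.
have [e e0 He] := (nbhs_ballP _ _).1 (cvgr_gt _ (phi_cont t) _ yphi).
have e0' : 0 < e := e0.
exists (t - e / 2); first lra.
by apply: He; rewrite /ball /= opprB addrC subrK ger0_norm; lra.
Qed.

Lemma continuous_gt_right (phi : R -> R) t y : continuous phi -> phi t < y ->
  exists2 a, t < a & phi a < y.
Proof.
move=> phi_cont phiy.
have [e e0 He] := (nbhs_ballP _ _).1 (cvgr_lt _ (phi_cont t) _ phiy).
have e0' : 0 < e := e0.
exists (t + e / 2); first lra.
by apply: He; rewrite /ball /= opprD addrA subrr sub0r normrN ger0_norm; lra.
Qed.
End Ramps.

Lemma choquet_step_down (R : realType) (Omega : Type) (w : set Omega -> R)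
    (X : Omega -> R) (t : R) :
  step_down_at (fun x => w [set o | x <= X o]) t -> choquet w X = t%:E.
Proof. exact: step_down_integral. Qed.

Section BinaryCapacity.
Variables (R : realType) (Omega : Type) (A : set (set Omega)).
Hypothesis algA : is_algebra A.
Variable v : set Omega -> R.
Hypothesis binv : binary_capacity A v.

Lemma bincap_up B C : A B -> A C -> B `<=` C -> v B = 1 -> v C = 1.
Proof.
move=> AB AC BC vB; have [[vle _ _] vbin] := binv.
by have := vle _ _ AB AC BC; rewrite vB; case: (vbin C AC) => ->; rewrite ?ler10.
Qed.

Lemma bincap_down B C : A B -> A C -> B `<=` C -> v C = 0 -> v B = 0.
Proof.
move=> AB AC BC vC; have [[vle _ _] vbin] := binv.
by have := vle _ _ AB AC BC; rewrite vC; case: (vbin B AB) => ->; rewrite ?ler10.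
Qed.

Lemma bincap_step_down (X : Omega -> R) : XA A X ->
  exists t, step_down_at (fun x => v [set o | x <= X o]) t.
Proof.
move=> XAX; have [[M XM] AX] := XAX; have [[_ v0 vT] vbin] := binv.
pose U x := v [set o | x <= X o] = 0.
have Uup x y : x <= y -> U x -> U y.
  move=> xy; apply: bincap_down; [exact: (AX y).2 | exact: (AX x).2 |].
  by move=> o /=; apply: le_trans.
have nU : exists x, ~ U x.
  exists (- M); rewrite /U (_ : [set o | _] = setT) ?vT; first exact/eqP/oner_neq0.
  by apply/seteqP; split => // o _ /=; move: (XM o); rewrite ler_norml => /andP[].
have U1 : exists x, U x.
  exists (M + 1); rewrite /U (_ : [set o | _] = set0) ?v0 //.
  apply/seteqP; split => // o /=.
  by move: (XM o); rewrite ler_norml => /andP[_ XoM] MXo; lra.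
have [t [ltU gtU]] := upset_cut Uup nU U1.
by exists t; split => // x /ltU; case: (vbin _ (AX x).2).
Qed.

Lemma bincap_step_down_comp (X : Omega -> R) (phi : R -> R) t : XA A X ->
  {homo phi : x y / x <= y} -> continuous phi ->
  step_down_at (fun x => v [set o | x <= X o]) t ->
  step_down_at (fun x => v [set o | x <= phi (X o)]) (phi t).
Proof.
move=> XAX phi_up phi_cont [vt1 vt0]; have [_ AX] := XAX.
have [_ AphiX] := XA_comp algA XAX phi_up.
split => x.
- case/(continuous_lt_left phi_cont) => a a_lt_t xa.
  apply: (bincap_up (AX a).2 (AphiX x).2 _ (vt1 a a_lt_t)) => o /= ao.
  exact/ltW/(lt_le_trans xa)/phi_up.
- case/(continuous_gt_right phi_cont) => a ta ax.
  apply: (bincap_down (AphiX x).2 (AX a).2 _ (vt0 a ta)) => o /= xo.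
  rewrite leNgt; apply/negP => Xa.
  by have := le_lt_trans (le_trans xo (phi_up _ _ (ltW Xa))) ax; rewrite ltxx.
Qed.

Lemma choquet_quantile_ordinality (Rm : (Omega -> R) -> R) :
  (forall X, XA A X -> (Rm X)%:E = choquet v X) -> ordinality A Rm.
Proof.
move=> RmE X phi XAX phi_up phi_cont.
have [t vt] := bincap_step_down XAX.
have RmX : Rm X = t by apply: EFin_inj; rewrite RmE // (choquet_step_down vt).
apply: EFin_inj; rewrite RmE ?RmX; last exact: XA_comp.
exact/choquet_step_down/bincap_step_down_comp.
Qed.
End BinaryCapacity.

Definition indic_capacity (R : realType) (Omega : Type) (Rm : (Omega -> R) -> R)
  (B : set Omega) : R := Rm \1_B.

Section Ordinality.
Variables (R : realType) (Omega : Type) (A : set (set Omega)).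
Hypothesis algA : is_algebra A.
Variable Rm : (Omega -> R) -> R.
Hypothesis ordRm : ordinality A Rm.
Local Notation v := (indic_capacity Rm).

Lemma ordinality_cst c : Rm (cst c) = c.
Proof.
by have := ordRm (phi := fun _ => c) (XA_cst algA 0) (fun _ _ _ => lexx c)
  (@cst_continuous R R c).
Qed.

Lemma ordinality_step_down (X : Omega -> R) : XA A X ->
  step_down_at (fun x => v [set o | x <= X o]) (Rm X).
Proof.
move=> XAX.
suff vX x : v [set o | x <= X o] = ramp x (Rm (gap_open x \o X)) /\
            Rm X = gap_close x (Rm (gap_open x \o X)).
  split=> x; have [-> ->] := vX x; rewrite /gap_close.
  - by rewrite lt_max lt_min ltxx andbF /= => ?; apply: ramp_ge1; lra.
  - by rewrite gt_max gt_min ltxx orbF => /andP[? _]; apply: ramp_le0; lra.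
have XAZ := XA_comp algA XAX (@gap_open_homo R x).
rewrite -(ordRm XAZ (@ramp_homo R x) (@ramp_continuous R x)).
rewrite -(ordRm XAZ (@gap_close_homo R x) (@gap_close_continuous R x)).
split; congr Rm; apply/funext => o /=; last by rewrite gap_openK.
rewrite ramp_gap_open indicE (_ : o \in _ = (x <= X o)) //.
by apply/idP/idP => [/set_mem|/mem_set].
Qed.

Lemma indic_capacity01 B : A B -> v B = 0 \/ v B = 1.
Proof.
move=> AB; have [vB1 vB0] := ordinality_step_down (XA_indic R algA AB).
have B1 : [set o | 1 <= (\1_B o : R)] = B.
  apply/seteqP; split => o /=; rewrite indicE.
    by case: (boolP (o \in B)) => [/set_mem //|]; rewrite ler10.
  by move/mem_set ->.
move: (vB1 1) (vB0 1); rewrite B1 => {}vB1 {}vB0.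
by have [/vB0|/vB1|] := ltgtP (v B) 1; [left | right | right].
Qed.

Lemma indic_capacity_le B C : A B -> A C -> B `<=` C -> v B <= v C.
Proof.
move=> AB AC BC; have [vX1 vX0] := ordinality_step_down (XA_indicD R algA AB AC BC).
have [levelC levelB] : [set o | 1 <= (\1_B o + \1_C o : R)] = C /\
    [set o | 2 <= (\1_B o + \1_C o : R)] = B.
  by split; apply/seteqP; split => o /=;
    case: (indicD_values R o BC) => -[? ? ->] *; first [done | lra].
move: (vX0 2) (vX1 1); rewrite levelB levelC => vB0 vC1.
have [X1|/vC1 ->] := leP (Rm (\1_B \+ \1_C)) 1.
  by rewrite vB0; [case: (indic_capacity01 AC) => -> | lra].
by case: (indic_capacity01 AB) => ->.
Qed.

Lemma indic_capacity_binary : binary_capacity A v.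
Proof.
split; last exact: indic_capacity01.
split; first exact: indic_capacity_le.
- by rewrite /indic_capacity indic0 ordinality_cst.
- by rewrite /indic_capacity indicT ordinality_cst.
Qed.

Lemma choquet_indic_capacity (X : Omega -> R) : XA A X ->
  (Rm X)%:E = choquet v X.
Proof. by move=> XAX; rewrite (choquet_step_down (ordinality_step_down XAX)). Qed.
End Ordinality.

Theorem theorem1 (R : realType) (Omega : Type) (A : set (set Omega))
  (Rm : (Omega -> R) -> R) :
  inhabited Omega -> is_algebra A ->
  (ordinality A Rm <->
   exists v : set Omega -> R,
     binary_capacity A v /\
     (forall X : Omega -> R, XA A X -> ((Rm X)%:E = choquet v X)%E)).
Proof.
move=> _ algA; split => [ordRm | [v [binv RmE]]].
  exists (indic_capacity Rm); split; first exact: indic_capacity_binary.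
  exact: choquet_indic_capacity.
exact: (choquet_quantile_ordinality algA binv RmE).
Qed.
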